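(* Let $\mathbb{F}$ be a field with $|\mathbb{F}| \ge n^2$. For every sufficiently large $n$, there exists a non-zero polynomial $Q \in \mathbb{F}[x_{1,1}, \ldots, x_{n,n}]$ of degree at most $n^3$ such that $Q(A)=0$ for every matrix $A\in\mathbb{F}^{n\times n}$ whose linear transformation is computed by a linear circuit of size at most $n^2/200$ (with no restriction on depth).
   Context: A linear circuit over $\mathbb{F}$ is a directed acyclic graph with $n$ input nodes labeled $X_1,\ldots,X_n$ and $n$ designated output nodes, each edge labeled by a scalar in $\mathbb{F}$. Each node computes a linear form in $X_1,\dots,X_n$: an input node computes its variable, and a node $u$ with children $v_1,\dots,v_k$ joined to it by edges labeled $\alpha_1,\dots,\alpha_k$ computes $\sum_i \alpha_i \ell_{v_i}$, where $\ell_{v_i}$ is the form computed by $v_i$. The size is the number of edges. The circuit computes the matrix $A$ whose $(i,j)$ entry is the coefficient of $X_i$ in the linear form computed at the $j$-th output node. $Q(A)$ denotes evaluation at $x_{i,j}=A_{i,j}$. *)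

From HB Require Import structures.
From mathcomp Require Import all_boot all_order all_algebra.
From mathcomp Require Import mpoly.
Set Implicit Arguments. Unset Strict Implicit. Unset Printing Implicit Defensive.
Import GRing.Theory.
Local Open Scope ring_scope.

(* A linear form sum_i c_i X_i in X_1..X_n is represented by the row vector
   (c_1 ... c_n) : 'rV[F]_n (coefficient of X_i at column i).

   A linear circuit is given by
   - a finite node set 'I_N,
   - a list E of labelled edges (v, u, alpha) : v is a child of u, i.e. the
     edge joins v to u with label alpha (multi-edges allowed),
   - an injective labelling inp : 'I_n -> 'I_N of the input nodes (inp i is X_i),
   - the designated output nodes out : 'I_n -> 'I_N,
   and it must be acyclic (witnessed by a ranking strictly increasing along
   every edge).  [val] is the assignment of linear forms to nodes: input
   nodes compute their variable, every other node u computes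
   sum over edges (v,u,alpha) of alpha * val v.  In a DAG this assignment
   exists and is unique, so quantifying it existentially is faithful. *)

Definition lc_acyclic (N : nat) (F : fieldType) (E : seq ('I_N * 'I_N * F)) :=
  exists rk : 'I_N -> nat, forall e, e \in E -> (rk e.1.1 < rk e.1.2)%N.

Definition lc_computes (F : fieldType) (n N : nat) (E : seq ('I_N * 'I_N * F))
    (inp out : 'I_n -> 'I_N) (val : 'I_N -> 'rV[F]_n) (A : 'M[F]_n) : Prop :=
  [/\ (forall i, val (inp i) = delta_mx 0 i),
      (forall u, u \notin codom inp ->
          val u = \sum_(e <- E | e.1.2 == u) e.2 *: val e.1.1)
    & (forall i j, A i j = val (out j) 0 i)].

Definition computable_by_linear_circuit_of_size (F : fieldType) (n s : nat)
    (A : 'M[F]_n) : Prop :=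
  exists (N : nat) (E : seq ('I_N * 'I_N * F)) (inp out : 'I_n -> 'I_N)
         (val : 'I_N -> 'rV[F]_n),
    [/\ (size E <= s)%N, injective inp, lc_acyclic E & lc_computes E inp out val A].

(* Polynomials in the n^2 variables x_{i,j}: variable x_{i,j} is the
   variable of index mxvec_index i j of {mpoly F[n * n]}.
   Q(A) := evaluation at x_{i,j} = A i j. *)
Definition eval_at_matrix (F : fieldType) (n : nat) (Q : {mpoly F[n * n]})
    (A : 'M[F]_n) : F :=
  Q.@[fun k => mxvec A 0 k].

Lemma eval_at_matrix_var (F : fieldType) (n : nat) (A : 'M[F]_n) (i j : 'I_n) :
  (fun k => mxvec A 0 k) (mxvec_index i j) = A i j.
Proof. by rewrite /= mxvecE. Qed.

(* |F| >= m, allowing F infinite. *)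
Definition card_at_least (F : fieldType) (m : nat) : Prop :=
  exists s : seq F, uniq s /\ size s = m.

From HB Require Import structures.
From mathcomp Require Import all_boot all_order all_algebra.
From mathcomp Require Import mpoly zify.
Set Implicit Arguments. Unset Strict Implicit. Unset Printing Implicit Defensive.
Import GRing.Theory.
Local Open Scope ring_scope.

(* After relabelling its nodes into a set of size M = 2n + 2s + 1, a circuit
   with s edges is described by a topology (the endpoints of the edges and the
   input and output nodes), taken from a finite set of size M^(2n+2s), together
   with the s edge labels.  For a fixed topology t, the computed matrix is the
   value at the labels of a matrix P_t of polynomials of degree at most M in s
   variables.  A polynomial Q in the n^2 entries with all exponents below n has
   n^(n^2) coefficients, and Q(P_t) = 0 for every t is a homogeneous linear
   system in them with at most M^(2n+2s) (n^3 M + 1)^s equations, one per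
   topology and per monomial of degree at most n^3 M.  For s <= n^2/200 and
   large n there are fewer equations than unknowns, so a nonzero Q exists. *)

Lemma exists_nontrivial_solution (F : fieldType) (I J : finType) (a : I -> J -> F) :
  (#|J| < #|I|)%N ->
  exists2 c : I -> F, exists i, c i != 0 & forall j, \sum_i c i * a i j = 0.
Proof.
move=> ltJI; pose Mx := \matrix_(i < #|I|, j < #|J|) a (enum_val i) (enum_val j).
have /rowV0Pn[v /sub_kermxP vMx0 v0] : kermx Mx != 0.
  by rewrite kermx_eq0 /row_free neq_ltn (leq_ltn_trans (rank_leq_col Mx)).
exists (fun i => v 0 (enum_rank i)) => [|j].
  case: (pickP (fun i => v 0 i != 0)) => [i vi0 | v_eq0].
    by exists (enum_val i); rewrite enum_valK.
  by case/eqP: v0; apply/rowP => i; rewrite mxE; apply/eqP/negbFE/v_eq0.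
have /rowP/(_ (enum_rank j)) := vMx0; rewrite !mxE (reindex enum_rank) /=.
  by under eq_bigr do rewrite mxE !enum_rankK.
exact: onW_bij (enum_rank_bij _).
Qed.

Section BoundedMonomials.
Variables (k e : nat).

Definition bounded_mnm (m : {ffun 'I_k -> 'I_e}) : 'X_{1..k} :=
  [multinom (m i : nat) | i < k].

Lemma bounded_mnm_inj : injective bounded_mnm.
Proof.
move=> m m' eq_mm'; apply/ffunP => i; apply/val_inj.
by have := congr1 (fun mm : 'X_{1..k} => mm i) eq_mm'; rewrite /= !mnmE.
Qed.

Lemma mdeg_bounded_mnm m : (mdeg (bounded_mnm m) <= k * e.-1)%N.
Proof.
rewrite mdegE -[k in (_ <= k * _)%N]card_ord -sum_nat_const.
by apply: leq_sum => i _; rewrite mnmE -ltnS prednK ?(leq_ltn_trans _ (ltn_ord (m i))).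
Qed.

Lemma bounded_mnmP (mm : 'X_{1..k}) : (mdeg mm < e)%N ->
  exists m, mm = bounded_mnm m.
Proof.
move=> lt_mm_e; have lt_e i : (mm i < e)%N.
  by apply: leq_ltn_trans lt_mm_e; rewrite mdegE (bigD1 i) //= leq_addr.
by exists [ffun i => Ordinal (lt_e i)]; apply/mnmP => i; rewrite mnmE ffunE.
Qed.

End BoundedMonomials.

Lemma msizeM_le_pred (R : idomainType) (k : nat) (p q : {mpoly R[k]}) :
  (msize (p * q) <= (msize p + msize q).-1)%N.
Proof.
have [->|p0] := eqVneq p 0; first by rewrite mul0r msize0.
have [->|q0] := eqVneq q 0; first by rewrite mulr0 msize0.
by rewrite msizeM.
Qed.

Lemma msize_prod_le (R : idomainType) (k : nat) (I : Type) (r : seq I) (P : pred I)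
    (G : I -> {mpoly R[k]}) :
  (msize (\prod_(i <- r | P i) G i) <= (\sum_(i <- r | P i) (msize (G i)).-1).+1)%N.
Proof.
elim/big_rec2: _ => [|i x p _ IH]; first by rewrite msize1.
apply: leq_trans (msizeM_le_pred _ _) _.
case: (msize (G i)) => [|a] /=; last lia.
by rewrite !add0n (leq_trans (leq_pred _) IH).
Qed.

Lemma msize_exp_le (R : idomainType) (k e : nat) (p : {mpoly R[k]}) :
  (msize (p ^+ e) <= (e * (msize p).-1).+1)%N.
Proof.
rewrite -[e in p ^+ e]subn0 -prodr_const_nat.
by apply: leq_trans (msize_prod_le _ _ _) _; rewrite sum_nat_const_nat subn0.
Qed.

Lemma msize_comp_mpolyX (R : idomainType) (k s d : nat) (m : 'X_{1..k})
    (lq : k.-tuple {mpoly R[s]}) :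
  (forall i, msize (tnth lq i) <= d.+1)%N ->
  (msize ('X_[m] \mPo lq) <= (mdeg m * d).+1)%N.
Proof.
move=> msize_lq; rewrite comp_mpolyX; apply: leq_trans (msize_prod_le _ _ _) _.
rewrite ltnS mdegE big_distrl /=; apply: leq_sum => i _.
rewrite -subn1 leq_subLR add1n (leq_trans (msize_exp_le _ _)) //.
by rewrite ltnS leq_mul // -subn1 leq_subLR add1n.
Qed.

Section Annihilator.
Variables (F : fieldType) (k s e d : nat) (T : finType).
Variable P : T -> k.-tuple {mpoly F[s]}.
Hypothesis msize_P : forall t i, (msize (tnth (P t) i) <= d.+1)%N.
Hypothesis card_lt : (#|T| * (k * e.-1 * d).+1 ^ s < e ^ k)%N.

Lemma exists_annihilating_mpoly :
  exists Q : {mpoly F[k]},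
    [/\ Q != 0, (msize Q <= (k * e.-1).+1)%N & forall t, Q \mPo P t = 0].
Proof.
pose b := (k * e.-1 * d)%N.
pose a (m : {ffun 'I_k -> 'I_e}) (c : T * {ffun 'I_s -> 'I_b.+1}) :=
  ('X_[bounded_mnm m] \mPo P c.1)@_(bounded_mnm c.2).
have [|c [m0 c_m0] c_sol] := exists_nontrivial_solution a.
  by rewrite card_prod !card_ffun !card_ord.
pose Q := \sum_m c m *: 'X_[bounded_mnm m].
have mcoeffQ m : Q@_(bounded_mnm m) = c m.
  rewrite raddf_sum (bigD1 m) //= mcoeffZ mcoeffX eqxx mulr1 big1 ?addr0 // => m' ne_m'm.
  by rewrite mcoeffZ mcoeffX (inj_eq (@bounded_mnm_inj _ _)) (negbTE ne_m'm) mulr0.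
have QPE t : Q \mPo P t = \sum_m c m *: ('X_[bounded_mnm m] \mPo P t).
  by rewrite raddf_sum; apply: eq_bigr => m _; exact: comp_mpolyZ.
exists Q; split.
- by apply: contraNneq c_m0 => Q0; rewrite -mcoeffQ Q0 mcoeff0.
- apply: leq_trans (mmeasure_sum _ _ _ _) _; apply/bigmax_leqP => m _.
  by apply: leq_trans (msizeZ_le _ _) _; rewrite msizeX ltnS mdeg_bounded_mnm.
move=> t; apply/mpolyP => mm; rewrite mcoeff0.
have [/bounded_mnmP[f ->]|large_mm] := ltnP (mdeg mm) b.+1.
  rewrite -(c_sol (t, f)) QPE raddf_sum; apply: eq_bigr => m _; exact: mcoeffZ.
apply/eqP; rewrite mcoeff_eq0; apply: msize_mdeg_ge; apply: leq_trans large_mm.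
rewrite QPE; apply: leq_trans (mmeasure_sum _ _ _ _) _; apply/bigmax_leqP => m _.
apply: leq_trans (msizeZ_le _ _) _; apply: leq_trans (msize_comp_mpolyX _ (msize_P t)) _.
by rewrite ltnS leq_mul // mdeg_bounded_mnm.
Qed.

End Annihilator.

Definition lc_nodes (F : fieldType) (n N : nat) (E : seq ('I_N * 'I_N * F))
    (inp out : 'I_n -> 'I_N) : {set 'I_N} :=
  [set x in codom inp ++ codom out ++ [seq e.1.1 | e <- E] ++ [seq e.1.2 | e <- E]].

Section LinearCircuitNodes.
Variables (F : fieldType) (n N : nat) (E : seq ('I_N * 'I_N * F)) (inp out : 'I_n -> 'I_N).

Lemma card_lc_nodes : (#|lc_nodes E inp out| <= n + n + size E + size E)%N.
Proof.
rewrite cardsE; apply: leq_trans (card_size _) _.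
by rewrite !size_cat !size_codom !size_map !card_ord !addnA.
Qed.

Lemma inp_lc_nodes i : inp i \in lc_nodes E inp out.
Proof. by rewrite inE mem_cat codom_f. Qed.

Lemma out_lc_nodes j : out j \in lc_nodes E inp out.
Proof. by rewrite inE !mem_cat codom_f orbT. Qed.

Lemma src_lc_nodes e : e \in E -> e.1.1 \in lc_nodes E inp out.
Proof. by move=> eE; rewrite inE !mem_cat (map_f _ eE) !orbT. Qed.

Lemma tgt_lc_nodes e : e \in E -> e.1.2 \in lc_nodes E inp out.
Proof. by move=> eE; rewrite inE !mem_cat (map_f (fun e => e.1.2) eE) !orbT. Qed.

End LinearCircuitNodes.

Section LinearCircuitRelabel.
Variables (F : fieldType) (n N N' : nat) (E : seq ('I_N * 'I_N * F)) (inp out : 'I_n -> 'I_N).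
Variable f : 'I_N -> 'I_N'.
Hypothesis f_inj : {in lc_nodes E inp out &, injective f}.

Definition relabel_preimage (y : 'I_N') := [pick x in lc_nodes E inp out | f x == y].

Lemma relabel_preimageK x : x \in lc_nodes E inp out -> relabel_preimage (f x) = Some x.
Proof.
move=> xR; rewrite /relabel_preimage; case: pickP => [z /andP[zR /eqP fz]|/(_ x)].
  by rewrite (f_inj zR xR fz).
by rewrite xR eqxx.
Qed.

Definition relabel_edges := [seq (f e.1.1, f e.1.2, e.2) | e <- E].

Lemma lc_acyclic_relabel : lc_acyclic E -> lc_acyclic relabel_edges.
Proof.
case=> rk rkE; exists (fun y => oapp rk 0%N (relabel_preimage y)) => _ /mapP[e eE ->] /=.
by rewrite !relabel_preimageK ?src_lc_nodes ?tgt_lc_nodes //; exact: rkE.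
Qed.

Lemma lc_computes_relabel (val : 'I_N -> 'rV[F]_n) (A : 'M[F]_n) :
  lc_computes E inp out val A ->
  lc_computes relabel_edges (f \o inp) (f \o out)
    (fun y => oapp val 0 (relabel_preimage y)) A.
Proof.
move=> [val_inp val_gate val_out]; split => [i|u uI|i j] /=.
- by rewrite relabel_preimageK ?inp_lc_nodes /=.
- rewrite big_map /= {1}/relabel_preimage.
  case: pickP => [x /andP[xR /eqP fx]|no_preimage] /=; last first.
    rewrite big_seq_cond big1 // => e /andP[eE /eqP fe].
    by have := no_preimage e.1.2; rewrite tgt_lc_nodes // fe eqxx.
  have xI : x \notin codom inp.
    by apply: contra uI => /codomP[i xi]; rewrite -fx xi (codom_f (f \o inp)).
  rewrite (val_gate x xI) big_seq_cond [RHS]big_seq_cond.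
  apply: eq_big => [e|e /andP[eE _]]; last by rewrite relabel_preimageK ?src_lc_nodes.
  case eE : (e \in E) => //=; rewrite -fx.
  by apply/eqP/eqP => [->//|/f_inj]; apply; rewrite ?tgt_lc_nodes.
- by rewrite relabel_preimageK ?out_lc_nodes /=.
Qed.

End LinearCircuitRelabel.

Lemma exists_inj_ord (T : finType) (R : {set T}) (m : nat) :
  (#|R| <= m)%N -> exists f : T -> 'I_m.+1, {in R &, injective f}.
Proof.
move=> card_R; have index_lt z : z \in R -> (index z (enum R) < m.+1)%N.
  by move=> zR; rewrite ltnS ltnW // (leq_trans _ card_R) // cardE index_mem mem_enum.
exists (fun x => inord (index x (enum R))) => x y xR yR /(congr1 (@nat_of_ord _)).
rewrite !inordK ?index_lt // => eq_index.
by apply: (index_inj x) eq_index; rewrite mem_enum.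
Qed.

Lemma computable_on_small_node_set (F : fieldType) (n s : nat) (A : 'M[F]_n) :
  computable_by_linear_circuit_of_size s A ->
  exists (E : seq ('I_(n + n + s + s).+1 * 'I_(n + n + s + s).+1 * F))
         (inp out : 'I_n -> 'I_(n + n + s + s).+1) (val : 'I_(n + n + s + s).+1 -> 'rV[F]_n),
    [/\ (size E <= s)%N, injective inp, lc_acyclic E & lc_computes E inp out val A].
Proof.
case=> N [E [inp [out [val [size_E inp_inj acyclic computes]]]]].
have [f f_inj] : exists f : 'I_N -> 'I_(n + n + s + s).+1, {in lc_nodes E inp out &, injective f}.
  by apply: exists_inj_ord; apply: leq_trans (card_lc_nodes _ _ _) _; lia.
exists (relabel_edges E f), (f \o inp), (f \o out),
  (fun y => oapp val 0 (relabel_preimage E inp out f y)); split.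
- by rewrite size_map.
- by move=> i j /f_inj; rewrite !inp_lc_nodes => /(_ isT isT) /inp_inj.
- exact: lc_acyclic_relabel f_inj acyclic.
- exact: (lc_computes_relabel f_inj computes).
Qed.

Section EdgeArrayCircuits.
Variables (n s M : nat).

Definition topology := ({ffun 'I_s -> 'I_M} * {ffun 'I_s -> 'I_M} *
  {ffun 'I_n -> 'I_M} * {ffun 'I_n -> 'I_M})%type.

Definition tsrc (t : topology) := t.1.1.1.
Definition ttgt (t : topology) := t.1.1.2.
Definition tinp (t : topology) := t.1.2.
Definition tout (t : topology) := t.2.

Variable F : fieldType.

(* Edges are stored in arrays indexed by 'I_s; unused slots get weight 0, so
   acyclicity is only required along edges of nonzero weight. *)
Definition edge_circuit_computes (t : topology) (w : 'I_s -> F)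
    (val : 'I_M -> 'rV[F]_n) (A : 'M[F]_n) :=
  [/\ injective (tinp t),
      exists rk : 'I_M -> nat, forall i, w i != 0 -> (rk (tsrc t i) < rk (ttgt t i))%N,
      forall i, val (tinp t i) = delta_mx 0 i,
      forall u, u \notin codom (tinp t) ->
        val u = \sum_(i | ttgt t i == u) w i *: val (tsrc t i)
    & forall i j, A i j = val (tout t j) 0 i].

(* The coefficient of X_j at node u, as a polynomial in the edge weights,
   computed by unfolding the circuit to depth k. *)
Fixpoint node_poly (t : topology) (k : nat) (u : 'I_M) (j : 'I_n) : {mpoly F[s]} :=
  if u \in codom (tinp t) then (tinp t j == u)%:R
  else if k is k'.+1 then \sum_(i | ttgt t i == u) 'X_i * node_poly t k' (tsrc t i) j
  else 0.

Definition circuit_mx (t : topology) : 'M[{mpoly F[s]}]_n :=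
  \matrix_(i, j) node_poly t M (tout t j) i.

Lemma msize_node_poly t k u j : (msize (node_poly t k u j) <= k.+1)%N.
Proof.
have msize_nat (b : bool) : (msize (b%:R : {mpoly F[s]}) <= 1)%N.
  by rewrite -mpolyC_nat mmeasureC leq_b1.
elim: k u => [|k IH] u /=; case: ifP => _.
- exact: msize_nat.
- by rewrite mmeasure0.
- exact: leq_trans (msize_nat _) _.
apply: leq_trans (mmeasure_sum _ _ _ _) _; apply/bigmax_leqP => i _.
by apply: leq_trans (msizeM_le_pred _ _) _; rewrite msizeX mdeg1 add2n /= ltnS IH.
Qed.

End EdgeArrayCircuits.

Lemma card_rank_lt (T : finType) (rk : T -> nat) (x y : T) : (rk x < rk y)%N ->
  (#|[set z | rk z < rk x]| < #|[set z | rk z < rk y]|)%N.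
Proof.
move=> lt_xy; apply: proper_card; apply/properP; split; last by exists x; rewrite !inE ?ltnn.
by apply/subsetP => z; rewrite !inE => lt_zx; apply: ltn_trans lt_zx lt_xy.
Qed.

Lemma card_rank_lt_card (T : finType) (rk : T -> nat) (x : T) :
  (#|[set z | rk z < rk x]| < #|T|)%N.
Proof.
by rewrite -cardsT proper_card // properT; apply/eqP => /setP/(_ x); rewrite !inE ltnn.
Qed.

Lemma meval_node_poly (F : fieldType) (n s M : nat) (t : topology n s M) (w : 'I_s -> F)
    (val : 'I_M -> 'rV[F]_n) (A : 'M[F]_n) :
  edge_circuit_computes t w val A -> forall u j, (node_poly F t M u j).@[w] = val u 0 j.
Proof.
case=> tinp_inj [rk rk_edge] val_inp val_gate _.
suff node_polyE k u j : (#|[set x | rk x < rk u]| < k)%N -> (node_poly F t k u j).@[w] = val u 0 j.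
  by move=> u j; apply: node_polyE; have := card_rank_lt_card rk u; rewrite card_ord.
elim: k u => [|k IH] u lt_k /=; first by rewrite ltn0 in lt_k.
case: ifP => [/codomP[i ->]|uI].
  by rewrite val_inp mxE rmorph_nat (inj_eq tinp_inj) eq_sym.
rewrite val_gate ?uI // summxE rmorph_sum; apply: eq_bigr => i /eqP tgt_i.
rewrite rmorphM /= mevalXU mxE; have [->|w_i] := eqVneq (w i) 0; first by rewrite !mul0r.
rewrite IH // -ltnS (leq_trans _ lt_k) // ltnS card_rank_lt // -tgt_i.
exact: rk_edge.
Qed.

Lemma edge_circuit_meval (F : fieldType) (n s M : nat) (t : topology n s M) (w : 'I_s -> F)
    (val : 'I_M -> 'rV[F]_n) (A : 'M[F]_n) :
  edge_circuit_computes t w val A -> A = map_mx (meval w) (circuit_mx F t).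
Proof.
move=> circ; have [_ _ _ _ val_out] := circ.
by apply/matrixP => i j; rewrite !mxE (meval_node_poly circ) val_out.
Qed.

Lemma edge_circuit_of_lc (F : fieldType) (n s m : nat) (E : seq ('I_m.+1 * 'I_m.+1 * F))
    (inp out : 'I_n -> 'I_m.+1) (val : 'I_m.+1 -> 'rV[F]_n) (A : 'M[F]_n) :
  (size E <= s)%N -> injective inp -> lc_acyclic E -> lc_computes E inp out val A ->
  exists (t : topology n s m.+1) (w : 'I_s -> F), edge_circuit_computes t w val A.
Proof.
move=> size_E inp_inj [rk rkE] [val_inp val_gate val_out].
pose def : 'I_m.+1 * 'I_m.+1 * F := (ord0, ord0, 0).
have nth_def i : (size E <= i)%N -> nth def E i = def by apply: nth_default.
exists ([ffun i : 'I_s => (nth def E i).1.1], [ffun i : 'I_s => (nth def E i).1.2],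
        [ffun j => inp j], [ffun j => out j]), (fun i => (nth def E i).2).
split; rewrite /tsrc /ttgt /tinp /tout /=.
- by move=> i j; rewrite !ffunE => /inp_inj.
- exists rk => i w_i; rewrite !ffunE; apply/rkE/mem_nth.
  by apply: contraNT w_i; rewrite -leqNgt => /nth_def ->.
- by move=> i; rewrite ffunE.
- move=> u uI; have uI' : u \notin codom inp.
    by apply: contra uI => /codomP[i ->]; apply/codomP; exists i; rewrite ffunE.
  rewrite (val_gate u uI') (big_nth def) big_mkord.
  rewrite (big_ord_widen_cond s (fun i => (nth def E i).1.2 == u)
             (fun i => (nth def E i).2 *: val (nth def E i).1.1) size_E).
  rewrite [RHS](bigID (fun i : 'I_s => (i < size E)%N)) /= [X in _ = _ + X]big1 ?addr0.
    by apply: eq_big => i; rewrite !ffunE.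
  by move=> i /andP[_]; rewrite -leqNgt => /nth_def ->; rewrite scale0r.
- by move=> i j; rewrite ffunE.
Qed.

Lemma computable_circuit_mx_meval (F : fieldType) (n s : nat) (A : 'M[F]_n) :
  computable_by_linear_circuit_of_size s A ->
  exists (t : topology n s (n + n + s + s).+1) (w : 'I_s -> F),
    A = map_mx (meval w) (circuit_mx F t).
Proof.
case/computable_on_small_node_set => E [inp [out [val [size_E inp_inj acyclic computes]]]].
have [t [w circ]] := edge_circuit_of_lc size_E inp_inj acyclic computes.
by exists t, w; apply: edge_circuit_meval circ.
Qed.

Lemma circuit_count_lt (n s M : nat) :
  (200 <= n)%N -> (s * 200 <= n ^ 2)%N -> M = (n + n + s + s).+1 ->
  (M ^ s * M ^ s * M ^ n * M ^ n * (n * n * n.-1 * M).+1 ^ s < n ^ (n * n))%N.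
Proof.
move=> n_ge s_le ->.
have leq_expn a b e : (a <= b)%N -> (a ^ e <= b ^ e)%N.
  by move=> le_ab; elim: e => // e IH; rewrite !expnS leq_mul.
have M_le : ((n + n + s + s).+1 <= n ^ 2)%N by nia.
have b_le : ((n * n * n.-1 * (n + n + s + s).+1).+1 <= n ^ 6)%N.
  have := leq_mul (leq_mul (leqnn (n * n)) (leq_pred n)) M_le; nia.
apply: (@leq_ltn_trans ((n ^ 2) ^ s * (n ^ 2) ^ s * (n ^ 2) ^ n * (n ^ 2) ^ n * (n ^ 6) ^ s)).
  by rewrite !leq_mul ?leq_expn.
rewrite -!expnM -!expnD ltn_exp2l; nia.
Qed.

Theorem theorem1p2 :
  exists n0 : nat, forall n : nat, (n0 <= n)%N ->
  forall F : fieldType, card_at_least F (n ^ 2) ->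
  exists Q : {mpoly F[n * n]},
    [/\ Q != 0,
        (msize Q <= (n ^ 3).+1)%N
      & forall A : 'M[F]_n,
          @computable_by_linear_circuit_of_size F n (n ^ 2 %/ 200) A ->
          @eval_at_matrix F n Q A = 0].
Proof.
exists 200%N => n n_ge F _.
set s := (n ^ 2 %/ 200)%N; set M := (n + n + s + s).+1.
pose P (t : topology n s M) : (n * n).-tuple {mpoly F[s]} :=
  [tuple mxvec (circuit_mx F t) 0 k | k < n * n].
have [||Q [Q_neq0 msize_Q QP]] := @exists_annihilating_mpoly F (n * n) s n M _ P.
- move=> t k; rewrite tnth_mktuple; case/mxvec_indexP: k => i j.
  by rewrite mxvecE mxE msize_node_poly.
- rewrite !card_prod !card_ffun !card_ord.
  by apply: circuit_count_lt => //; rewrite leq_trunc_div.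
exists Q; split => // [|A /computable_circuit_mx_meval[t [w ->]]].
  by apply: leq_trans msize_Q _; rewrite ltnS -subn1; nia.
rewrite /eval_at_matrix; transitivity ((Q \mPo P t).@[w]); last by rewrite QP meval0.
by rewrite comp_mpoly_meval; apply: meval_eq => k; rewrite tnth_mktuple -map_mxvec mxE.
Qed.
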